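(* Let $m,n,k$ be positive integers with $k\le n$, $A\in\mathbb{R}^{m\times n}$ and $y\in\mathbb{R}^m$. Let $F(x)=\frac12\|Ax-y\|_2^2$ for $x\in\mathbb{R}^n$, and let $H:\mathbb{R}^n\to\mathbb{R}^n$ be any map such that for every $\mathcal{X}\in\mathbb{R}^n$, $$H(\mathcal{X})\in\arg\min\left\{\tfrac12\|Ax-y\|_2^2 : x\in\mathbb{R}^n,\ \mathrm{supp}(x)\subseteq\mathrm{largest}_k(\mathcal{X})\right\}.$$ Then: (1) for any $\mathcal{X}^*\in\arg\min_{\mathcal{X}\in\mathbb{R}^n}F(H(\mathcal{X}))$, the vector $H(\mathcal{X}^* )$ is a solution of $\min_{x\in\mathbb{R}^n}F(x)$ subject to $\|x\|_0\le k$; (2) for any minimizer $x'$ of $\min_{x\in\mathbb{R}^n}F(x)$ subject to $\|x\|_0\le k$, we have $x'\in\arg\min_{\mathcal{X}\in\mathbb{R}^n}F(H(\mathcal{X}))$.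
   Context: $\mathrm{supp}(x)=\{i:x_i\neq0\}$ and $\|x\|_0=|\mathrm{supp}(x)|$. For $v\in\mathbb{R}^n$, $\mathrm{largest}_k(v)$ is the set of indices of the $k$ entries of $v$ with largest absolute value (ties broken by selecting the highest indices). *)

From mathcomp Require Import all_boot all_order all_algebra.
From mathcomp Require Import reals.
Set Implicit Arguments. Unset Strict Implicit. Unset Printing Implicit Defensive.
Import Order.TTheory GRing.Theory Num.Theory.
Local Open Scope ring_scope.

Definition supp (R : realType) (n : nat) (x : 'cV[R]_n) : {set 'I_n} :=
  [set i | x i 0 != 0].

Definition l0norm (R : realType) (n : nat) (x : 'cV[R]_n) : nat := #|supp x|.

(* j "beats" i when |v_j| > |v_i|, or |v_j| = |v_i| and j has the higher index
   (ties broken in favour of highest indices). *)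
Definition beats (R : realType) (n : nat) (v : 'cV[R]_n) (j i : 'I_n) : bool :=
  (`|v i 0| < `|v j 0|) || ((`|v j 0| == `|v i 0|) && (i < j)%N).

(* largest_k(v): the k indices ranked highest in the strict total order above,
   i.e. those beaten by fewer than k indices. *)
Definition largest (R : realType) (n : nat) (k : nat) (v : 'cV[R]_n) : {set 'I_n} :=
  [set i | (#|[set j | beats v j i]| < k)%N].

Definition lsq (R : realType) (m n : nat) (A : 'M[R]_(m, n)) (y : 'cV[R]_m)
  (x : 'cV[R]_n) : R :=
  2^-1 * \sum_(i < m) ((A *m x - y) i 0) ^+ 2.

(* H X is supported in largest_k X, a set of at most k indices, so F o H only
   takes values of F at k-sparse points.  Conversely a k-sparse x satisfies
   supp x \subset largest_k x, because every index beating an index of supp x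
   lies in supp x as well; hence F (H x) <= F x.  So F o H and F restricted to
   k-sparse vectors have the same infimum, and the argmins correspond. *)
From mathcomp Require Import all_boot all_order all_algebra.
From mathcomp Require Import reals.
Set Implicit Arguments. Unset Strict Implicit. Unset Printing Implicit Defensive.
Import Order.TTheory GRing.Theory Num.Theory.
Local Open Scope ring_scope.

Section Largest.
Variables (R : realType) (n : nat) (v : 'cV[R]_n).

Lemma beatsxx i : beats v i i = false.
Proof. by rewrite /beats ltxx ltnn andbF. Qed.

Lemma beats_trans i j l : beats v j i -> beats v l j -> beats v l i.
Proof.
rewrite /beats => /orP[lt_ij|/andP[/eqP eq_ij lt_ij]] /orP[lt_jl|/andP[/eqP eq_jl lt_jl]].
- by rewrite (lt_trans lt_ij lt_jl).
- by rewrite eq_jl lt_ij.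
- by rewrite -eq_ij lt_jl.
- by rewrite eq_jl eq_ij eqxx (ltn_trans lt_ij lt_jl) orbT.
Qed.

Lemma beats_total i j : i != j -> beats v i j || beats v j i.
Proof.
move=> neq_ij; rewrite /beats eq_sym.
case: ltgtP => //= _; rewrite ?orbT //.
by case: ltngtP neq_ij => // /val_inj ->; rewrite eqxx.
Qed.

Definition rank i := #|[set j | beats v j i]|.

Lemma rank_lt i j : beats v j i -> (rank j < rank i)%N.
Proof.
move=> beats_ji; apply/proper_card/properP; split.
  by apply/subsetP => l; rewrite !inE; apply: beats_trans.
by exists j; rewrite !inE ?beatsxx.
Qed.

Lemma rank_inj : injective rank.
Proof.
move=> i j eq_rank; apply/eqP/negPn/negP => /beats_total.
by case/orP=> /rank_lt; rewrite eq_rank ltnn.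
Qed.

Lemma card_largest k : (#|largest k v| <= k)%N.
Proof.
rewrite cardE -(size_map rank) -[X in (_ <= X)%N](size_iota 0).
apply: uniq_leq_size; first by rewrite (map_inj_uniq rank_inj) enum_uniq.
by move=> r /mapP[i]; rewrite mem_enum inE mem_iota => lt_ik ->.
Qed.

End Largest.

Lemma supp_largest (R : realType) (n k : nat) (x : 'cV[R]_n) :
  (l0norm x <= k)%N -> supp x \subset largest k x.
Proof.
move=> sparse_x; apply/subsetP => i supp_i; rewrite inE.
have beaters_supp : [set j | beats x j i] \subset supp x :\ i.
  apply/subsetP => j; rewrite !inE => beats_ji.
  have -> : j != i by apply: contraTneq beats_ji => ->; rewrite beatsxx.
  move: supp_i beats_ji; rewrite inE -!normr_gt0 /beats => gt0_i.
  by case/orP=> [/(lt_trans gt0_i)|/andP[/eqP -> _]].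
apply: leq_ltn_trans (subset_leq_card beaters_supp) _.
by rewrite /l0norm (cardsD1 i) supp_i add1n in sparse_x.
Qed.

Section SparseReparametrization.
Variables (R : realType) (n k : nat).
Variables (f : 'cV[R]_n -> R) (H : 'cV[R]_n -> 'cV[R]_n).
Hypothesis H_argmin : forall X : 'cV[R]_n,
  supp (H X) \subset largest k X /\
  (forall x : 'cV[R]_n, supp x \subset largest k X -> f (H X) <= f x).

Lemma l0norm_H X : (l0norm (H X) <= k)%N.
Proof. exact: leq_trans (subset_leq_card (H_argmin X).1) (card_largest X k). Qed.

Lemma le_H_sparse x : (l0norm x <= k)%N -> f (H x) <= f x.
Proof. by move=> /supp_largest; apply: (H_argmin x).2. Qed.

Lemma argmin_comp_H_sparse Xs :
  (forall X, f (H Xs) <= f (H X)) ->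
  forall x, (l0norm x <= k)%N -> f (H Xs) <= f x.
Proof. by move=> Xs_min x /le_H_sparse; apply: le_trans. Qed.

Lemma sparse_argmin_comp_H x' :
  (l0norm x' <= k)%N -> (forall x, (l0norm x <= k)%N -> f x' <= f x) ->
  forall X, f (H x') <= f (H X).
Proof.
move=> /le_H_sparse le_Hx' x'_min X.
exact: le_trans le_Hx' (x'_min _ (l0norm_H X)).
Qed.

End SparseReparametrization.

Theorem propositionA1 (R : realType) (m n k : nat)
  (A : 'M[R]_(m, n)) (y : 'cV[R]_m) (H : 'cV[R]_n -> 'cV[R]_n) :
  (0 < m)%N -> (0 < n)%N -> (0 < k)%N -> (k <= n)%N ->
  (forall X : 'cV[R]_n,
      supp (H X) \subset largest k X /\
      (forall x : 'cV[R]_n, supp x \subset largest k X ->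
         lsq A y (H X) <= lsq A y x)) ->
  (forall Xs : 'cV[R]_n,
      (forall X : 'cV[R]_n, lsq A y (H Xs) <= lsq A y (H X)) ->
      (l0norm (H Xs) <= k)%N /\
      (forall x : 'cV[R]_n, (l0norm x <= k)%N -> lsq A y (H Xs) <= lsq A y x))
  /\
  (forall x' : 'cV[R]_n,
      (l0norm x' <= k)%N ->
      (forall x : 'cV[R]_n, (l0norm x <= k)%N -> lsq A y x' <= lsq A y x) ->
      (forall X : 'cV[R]_n, lsq A y (H x') <= lsq A y (H X))).
Proof.
move=> _ _ _ _ H_argmin; split.
  by move=> Xs Xs_min; split; [exact: l0norm_H | exact: argmin_comp_H_sparse].
exact: sparse_argmin_comp_H.
Qed.
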